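(* Let $q$ be a prime power, $t\geq 2$ and $n\geq 1$ integers, and $\sigma=\begin{pmatrix} a & b\\ c & d\end{pmatrix}\in\mathrm{GL}_2(\mathbb{F}_q)$. Suppose that the polynomial $x^{nt}-A\in\mathbb{F}_q[x]$, with $A\neq -d/c$, is irreducible over $\mathbb{F}_q$, and if $t$ is even assume moreover $q\equiv 1\pmod 4$. Then $g_0=P_{\sigma^{-1}}(x^n-A)$ is an irreducible polynomial of degree $n$ with $g_0(\sigma\cdot\infty)\neq 0$, and $g_1=g_0^{R_{\sigma,t}}$ is irreducible.
   Context: For $\sigma=\begin{pmatrix} a & b\\ c & d\end{pmatrix}\in\mathrm{GL}_2(\mathbb{F}_q)$, $\sigma\cdot\infty=a/c$ if $c\neq 0$ and $\sigma\cdot\infty=\infty$ if $c=0$. For $f\in\mathbb{F}_q[x]$ of degree $m$, $P_\sigma(f)(x)=(cx+d)^m f\!\left(\frac{ax+b}{cx+d}\right)$; $\sigma^{-1}$ is the inverse matrix. $S_t(f)(x)=f(x^t)$, and the $R_{\sigma,t}$-transform is $g^{R_{\sigma,t}}=P_{\sigma^{-1}}\circ S_t\circ P_\sigma(g)$ (each $P$ using the degree of its input). *)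

From HB Require Import structures.
From mathcomp Require Import all_boot all_order all_algebra all_field.
Set Implicit Arguments. Unset Strict Implicit. Unset Printing Implicit Defensive.
Import GRing.Theory.
Local Open Scope ring_scope.

Definition mxa (F : fieldType) (s : 'M[F]_2) : F := s ord0 ord0.
Definition mxb (F : fieldType) (s : 'M[F]_2) : F := s ord0 ord_max.
Definition mxc (F : fieldType) (s : 'M[F]_2) : F := s ord_max ord0.
Definition mxd (F : fieldType) (s : 'M[F]_2) : F := s ord_max ord_max.

(* P_sigma(f)(x) = (cx+d)^m f((ax+b)/(cx+d)), m = deg f, i.e.
   sum_i f_i (ax+b)^i (cx+d)^(m-i). *)
Definition Ptrans (F : fieldType) (s : 'M[F]_2) (f : {poly F}) : {poly F} :=
  let m := (size f).-1 in
  \sum_(i < size f)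
     f`_i *: (('X * (mxa s)%:P + (mxb s)%:P) ^+ i *
              ('X * (mxc s)%:P + (mxd s)%:P) ^+ (m - i)).

Definition Strans (F : fieldType) (t : nat) (f : {poly F}) : {poly F} :=
  f \Po 'X^t.

Definition Rtrans (F : fieldType) (s : 'M[F]_2) (t : nat) (g : {poly F})
  : {poly F} := Ptrans (invmx s) (Strans t (Ptrans s g)).

(* sigma . infinity, as a point of P^1(F) = option F (None = infinity). *)
Definition act_inf (F : fieldType) (s : 'M[F]_2) : option F :=
  if mxc s != 0 then Some (mxa s / mxc s) else None.

(* Vanishing of a polynomial at a point of P^1(F); a polynomial in F[x]
   is never considered to vanish at infinity. *)
Definition proj_root (F : fieldType) (g : {poly F}) (p : option F) : bool :=
  if p is Some x then root g x else false.

(* With its degree fixed to m, P_sigma f is (cx+d)^m f((ax+b)/(cx+d)), an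
   identity checked in the fraction field of F[x].  Hence P_sigma is
   multiplicative and P_(sigma^-1) undoes it, so P_sigma maps an irreducible
   polynomial whose degree it preserves to an irreducible polynomial.  As
   P_sigma cancels P_(sigma^-1) on x^n - A, g1 = P_(sigma^-1)(x^(nt) - A), and
   x^n - A is irreducible because x^(nt) - A = (x^n - A)(x^t) is.  It remains
   to see that degrees are preserved: the coefficient of x^m in
   P_(sigma^-1)(x^m - A) is a'^m - A c'^m, and if it vanished then A would be
   the m-th power of a'/c' = sigma^-1 . infinity = -d/c, making x^t - a'/c'
   (for m = n) or x - a'/c' (for m = nt) a proper factor of x^(nt) - A, except
   when m = n = 1, which is the excluded case A = -d/c.  Finally
   g0(a/c) = c^-n because c'a + d'c = 0. *)

From HB Require Import structures.
From mathcomp Require Import all_boot all_order all_algebra all_field.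
From mathcomp Require Import ring zify.
Import GRing.Theory.
Set Implicit Arguments. Unset Strict Implicit. Unset Printing Implicit Defensive.
Local Open Scope ring_scope.

Section Mx2.
Variable F : fieldType.
Implicit Types M N : 'M[F]_2.

Lemma mx2_mul_eq1 M N : M *m N = 1%:M ->
  [/\ mxa M * mxa N + mxb M * mxc N = 1, mxa M * mxb N + mxb M * mxd N = 0,
      mxc M * mxa N + mxd M * mxc N = 0 & mxc M * mxb N + mxd M * mxd N = 1].
Proof.
move=> MN1; have e i j := congr1 (fun B : 'M[F]_2 => B i j) MN1.
move: (e ord0 ord0) (e ord0 ord_max) (e ord_max ord0) (e ord_max ord_max).
rewrite !mxE !big_ord_recl !big_ord0 !addr0 /=.
have -> : lift ord0 ord0 = ord_max :> 'I_2 by apply/val_inj.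
by move=> -> -> -> ->.
Qed.

Lemma act_inf_invmx M : M \in unitmx ->
  act_inf (invmx M) = if mxc M != 0 then Some (- mxd M / mxc M) else None.
Proof.
move=> uM; have [_ _ r3 r4] := mx2_mul_eq1 (mulmxV uM).
have [_ _ l3 l4] := mx2_mul_eq1 (mulVmx uM).
rewrite /act_inf; have [c0|c0] := eqVneq (mxc M) 0.
  move: r3 r4; rewrite c0 !mul0r !add0r => /eqP; rewrite mulf_eq0 => /orP[/eqP d0|->//].
  by rewrite d0 mul0r => /eqP; rewrite eq_sym oner_eq0.
have c'0 : mxc (invmx M) != 0.
  apply/eqP => c'0; move: l3 l4; rewrite c'0 !mul0r !add0r => /eqP.
  rewrite mulf_eq0 (negbTE c0) orbF => /eqP ->; rewrite mul0r => /eqP.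
  by rewrite eq_sym oner_eq0.
rewrite c'0; congr Some; apply/(canLR (mulfK c'0)).
move/eqP: r3; rewrite addr_eq0 => /eqP r3.
by rewrite -[mxa _](mulKf c0) r3; ring.
Qed.

End Mx2.

Lemma irredp_XnsubC_exp (F : fieldType) e j (w : F) : (0 < e)%N ->
  irreducible_poly ('X^(e * j) - (w ^+ j)%:P) -> j = 1%N.
Proof.
move=> e_gt0 irr; have [j0|j_gt0] := posnP j.
  by case: irr; rewrite j0 muln0 expr0 subrr size_poly0.
have : 'X^e - w%:P %= 'X^(e * j) - (w ^+ j)%:P.
  apply: irr; first by rewrite size_XnsubC // eqSS -lt0n.
  by rewrite exprM polyC_exp subrXX dvdp_mulIl.
by move/eqp_size; rewrite !size_XnsubC ?muln_gt0 ?e_gt0 // => -[]; nia.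
Qed.

Lemma irredp_comp_poly (R : idomainType) (p q : {poly R}) :
  (1 < size q)%N -> irreducible_poly (p \Po q) -> irreducible_poly p.
Proof.
move=> sq irr_pq; have pq0 := irredp_neq0 irr_pq.
have p0 : p != 0 by apply: contraNneq pq0 => ->; rewrite comp_poly0.
have size_comp r : r != 0 -> size (r \Po q) = ((size r).-1 * (size q).-1).+1.
  by move=> r0; rewrite -size_comp_poly prednK // size_poly_gt0 comp_poly_eq0.
have sp := size_poly_gt0 p; rewrite p0 in sp.
split=> [|r sr dvd_rp].
  by case: irr_pq; rewrite size_comp //; case: (size p) sp => [|[]] //=; rewrite mul0n.
have r0 : r != 0 by apply: contraNneq p0 => r0; rewrite -dvd0p -r0.
have srp := size_poly_gt0 r; rewrite r0 in srp.
have : r \Po q %= p \Po q.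
  apply: irr_pq (dvdp_comp_poly _ dvd_rp); rewrite size_comp //.
  by move: sr srp sq; move: (size r) (size q) => ? ?; nia.
move/eqp_size; rewrite !size_comp // => e_size; rewrite -dvdp_size_eqp //.
by apply/eqP; move: e_size sp srp sq; move: (size r) (size p) (size q) => ? ? ?; nia.
Qed.

Lemma Strans_XnsubC (F : fieldType) t n (A : F) :
  Strans t ('X^n - A%:P) = 'X^(n * t) - A%:P.
Proof. by rewrite /Strans comp_polyB comp_polyC comp_Xn_poly -exprM mulnC. Qed.

Section Ptrans_deg.
Variable F : fieldType.
Implicit Types (M : 'M[F]_2) (f : {poly F}).

Definition mob_num M : {poly F} := 'X * (mxa M)%:P + (mxb M)%:P.
Definition mob_den M : {poly F} := 'X * (mxc M)%:P + (mxd M)%:P.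

Definition Ptrans_deg M m f : {poly F} :=
  \sum_(i < m.+1) f`_i *: (mob_num M ^+ i * mob_den M ^+ (m - i)).

Lemma Ptrans_degE M f : Ptrans M f = Ptrans_deg M (size f).-1 f.
Proof.
rewrite /Ptrans /Ptrans_deg; case sf: (size f) => [|k] //=.
by rewrite big_ord0 big_ord1 nth_default ?sf // scale0r.
Qed.

Lemma size_linear_poly (a b : F) : (size ('X * a%:P + b%:P)%R <= 2)%N.
Proof. by rewrite mulrC size_MXaddC; case: ifP; rewrite // ltnS size_polyC leq_b1. Qed.

Lemma size_Ptrans_deg M m f : (size (Ptrans_deg M m f) <= m.+1)%N.
Proof.
rewrite (leq_trans (size_sum _ _ _)) //; apply/bigmax_leqP => i _.
rewrite (leq_trans (size_scale_leq _ _)) // (leq_trans (size_polyMleq _ _)) //.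
have := size_poly_exp_leq (mob_num M) i; have := size_poly_exp_leq (mob_den M) (m - i).
have := size_linear_poly (mxa M) (mxb M); have := size_linear_poly (mxc M) (mxd M).
rewrite /mob_num /mob_den; have := ltn_ord i; nia.
Qed.

Lemma size_Ptrans M f : (size (Ptrans M f) <= size f)%N.
Proof.
have [->|f0] := eqVneq f 0; first by rewrite /Ptrans size_poly0 big_ord0 size_poly0.
by rewrite Ptrans_degE (leq_trans (size_Ptrans_deg _ _ _)) // prednK ?size_poly_gt0.
Qed.

Lemma horner_map_Ptrans_deg (L : fieldType) (phi : {rmorphism F -> L}) M m f z :
    (size f <= m.+1)%N -> phi (mxc M) * z + phi (mxd M) != 0 ->
  (map_poly phi (Ptrans_deg M m f)).[z] =
  (phi (mxc M) * z + phi (mxd M)) ^+ m *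
  (map_poly phi f).[(phi (mxa M) * z + phi (mxb M)) / (phi (mxc M) * z + phi (mxd M))].
Proof.
set y := phi (mxc M) * z + _; set x := phi (mxa M) * z + _ => sf y0.
rewrite [in RHS](@horner_coef_wide _ m.+1) ?size_map_poly // mulr_sumr.
rewrite rmorph_sum horner_sum; apply: eq_bigr => i _ /=.
rewrite map_polyZ hornerZ coef_map !rmorphM !rmorphXn /= hornerM !horner_exp.
rewrite !(rmorphD, rmorphM) /= !map_polyX !map_polyC !hornerE ![z * _]mulrC -/x -/y.
have le_im : (i <= m)%N by rewrite -ltnS.
have -> : y ^+ m = y ^+ i * y ^+ (m - i) by rewrite -exprD subnKC.
rewrite expr_div_n.
by move: (x ^+ i) (y ^+ (m - i)) (expf_neq0 i y0) => a b yi0 /=; field.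
Qed.

Lemma mob_den_neq0 M : M \in unitmx -> mob_den M != 0.
Proof.
move=> uM; have [_ _ _ r4] := mx2_mul_eq1 (mulmxV uM).
apply: contra_eq_neq r4 => den0.
move: (congr1 (coefp 1) den0) (congr1 (coefp 0) den0) => /=.
rewrite !coefD !coefXM !coefC /= add0r addr0 => -> ->.
by rewrite !mul0r add0r eq_sym oner_neq0.
Qed.

Local Notation K := {fraction {poly F}}.
Local Notation tofrac := (@FracField.tofrac {poly F}).
Local Notation iota := (tofrac \o polyC).

Lemma horner_map_tofrac_X f : (map_poly iota f).[tofrac 'X] = tofrac f.
Proof. by rewrite map_poly_comp (horner_map tofrac) -[in RHS](comp_polyXr f). Qed.

Lemma tofrac_mob_num M : tofrac (mob_num M) = iota (mxa M) * tofrac 'X + iota (mxb M).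
Proof. by rewrite !rmorphD !rmorphM mulrC. Qed.

Lemma tofrac_mob_den M : tofrac (mob_den M) = iota (mxc M) * tofrac 'X + iota (mxd M).
Proof. by rewrite !rmorphD !rmorphM mulrC. Qed.

Lemma tofrac_Ptrans_deg M m f : M \in unitmx -> (size f <= m.+1)%N ->
  tofrac (Ptrans_deg M m f) =
  tofrac (mob_den M) ^+ m * (map_poly iota f).[tofrac (mob_num M) / tofrac (mob_den M)].
Proof.
move=> uM sf; rewrite -horner_map_tofrac_X horner_map_Ptrans_deg //.
  by rewrite tofrac_mob_num tofrac_mob_den.
by rewrite -tofrac_mob_den tofrac_eq0 mob_den_neq0.
Qed.

Lemma Ptrans_degM M m1 m2 (f g : {poly F}) : M \in unitmx ->
    (size f <= m1.+1)%N -> (size g <= m2.+1)%N ->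
  Ptrans_deg M (m1 + m2) (f * g) = Ptrans_deg M m1 f * Ptrans_deg M m2 g.
Proof.
move=> uM sf sg; apply/eqP; rewrite -tofrac_eq tofracM !tofrac_Ptrans_deg //.
  by rewrite rmorphM hornerM exprD mulrACA.
by rewrite (leq_trans (size_polyMleq _ _)) //; lia.
Qed.

Lemma Ptrans_degK M m f : M \in unitmx -> (size f <= m.+1)%N ->
  Ptrans_deg (invmx M) m (Ptrans_deg M m f) = f.
Proof.
move=> uM sf; have uN : invmx M \in unitmx by rewrite unitmx_inv.
apply/eqP; rewrite -tofrac_eq tofrac_Ptrans_deg ?size_Ptrans_deg //.
rewrite tofrac_mob_num tofrac_mob_den.
set x := iota (mxa _) * _ + _; set y := iota (mxc _) * _ + _.
have y0 : y != 0 by rewrite /y -tofrac_mob_den tofrac_eq0 mob_den_neq0.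
have [r1 r2 r3 r4] := mx2_mul_eq1 (mulmxV uM).
(* [M] sends [x / y], the image of [X] under [invmx M], back to [X]. *)
have shift (p q u v : K) : v != 0 -> p * (u / v) + q = (p * u + q * v) / v.
  by move=> v0; rewrite [RHS]mulrDl mulfK // mulrA.
have ex : iota (mxa M) * (x / y) + iota (mxb M) = tofrac 'X / y.
  rewrite shift //; congr (_ / _).
  transitivity (iota (mxa M * mxa (invmx M) + mxb M * mxc (invmx M)) * tofrac 'X +
                iota (mxa M * mxb (invmx M) + mxb M * mxd (invmx M))).
    by rewrite /x /y !rmorphD !rmorphM /=; ring.
  by rewrite r1 r2 rmorph1 rmorph0 mul1r addr0.
have ey : iota (mxc M) * (x / y) + iota (mxd M) = y^-1.
  rewrite shift // -[RHS]div1r; congr (_ / _).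
  transitivity (iota (mxc M * mxa (invmx M) + mxd M * mxc (invmx M)) * tofrac 'X +
                iota (mxc M * mxb (invmx M) + mxd M * mxd (invmx M))).
    by rewrite /x /y !rmorphD !rmorphM /=; ring.
  by rewrite r3 r4 rmorph1 rmorph0 mul0r add0r.
rewrite horner_map_Ptrans_deg ?ey; [| exact: sf | by rewrite invr_eq0].
rewrite ex invrK (mulfVK y0) horner_map_tofrac_X exprVn mulrA.
by rewrite (mulfV (expf_neq0 m y0)) mul1r.
Qed.

Lemma PtransM M p q : M \in unitmx -> p != 0 -> q != 0 ->
  Ptrans M (p * q) = Ptrans M p * Ptrans M q.
Proof.
move=> uM p0 q0; rewrite !Ptrans_degE size_mul //.
have sp := size_poly_gt0 p; have sq := size_poly_gt0 q; rewrite p0 in sp; rewrite q0 in sq.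
have -> : (size p + size q).-2 = ((size p).-1 + (size q).-1)%N by lia.
by rewrite Ptrans_degM // prednK.
Qed.

Lemma PtransK M f : M \in unitmx -> size (Ptrans M f) = size f ->
  Ptrans (invmx M) (Ptrans M f) = f.
Proof.
move=> uM sPf; rewrite [in LHS]Ptrans_degE sPf Ptrans_degE Ptrans_degK //.
by case: (size f).
Qed.

Lemma size_Ptrans_mulr M p q : M \in unitmx -> p != 0 -> q != 0 ->
  size (Ptrans M (p * q)) = size (p * q) -> size (Ptrans M q) = size q.
Proof.
move=> uM p0 q0; rewrite PtransM // => sPpq.
have Ppq0 : Ptrans M p * Ptrans M q != 0 by rewrite -size_poly_gt0 sPpq size_poly_gt0 mulf_neq0.
rewrite mulf_eq0 negb_or in Ppq0; case/andP: Ppq0 => Pp0 Pq0.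
move: sPpq (size_Ptrans M p) (size_Ptrans M q); rewrite !size_mul //.
move: (size_poly_gt0 (Ptrans M p)); rewrite Pp0.
move: (size (Ptrans M p)) (size (Ptrans M q)) (size p) (size q) => ? ? ? ?; lia.
Qed.

Lemma irredp_Ptrans M f : M \in unitmx -> irreducible_poly f ->
  size (Ptrans M f) = size f -> irreducible_poly (Ptrans M f).
Proof.
move=> uM irr_f sPf; set g := Ptrans M f; have uN : invmx M \in unitmx by rewrite unitmx_inv.
have Kg : Ptrans (invmx M) g = f by exact: PtransK.
split=> [|q sq dvd_qg]; first by rewrite sPf; case: irr_f.
have g0 : g != 0 by rewrite -size_poly_gt0 sPf size_poly_gt0 irredp_neq0.
have q0 : q != 0 by apply: contraNneq g0 => q0; rewrite -dvd0p -q0.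
have Dg : g = g %/ q * q by rewrite divpK.
have r0 : g %/ q != 0 by apply: contraNneq g0 => r0; rewrite Dg r0 mul0r.
have sPq : size (Ptrans (invmx M) q) = size q.
  by apply: (size_Ptrans_mulr uN r0 q0); rewrite -Dg Kg.
have : Ptrans (invmx M) q %= f.
  apply: irr_f; first by rewrite sPq.
  by rewrite -Kg [in X in _ %| X]Dg PtransM // dvdp_mull.
by move/eqp_size; rewrite sPq -sPf => e; rewrite -dvdp_size_eqp // e.
Qed.

Lemma coef_linear_exp (a b : F) k : (('X * a%:P + b%:P) ^+ k)`_k = a ^+ k.
Proof.
elim: k => [|k IHk]; first by rewrite !expr0 coefC.
rewrite exprSr mulrDr mulrA coefD !coefMC coefMX /= IHk.
rewrite [_`_k.+1]nth_default ?mul0r ?addr0 -?exprSr //.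
rewrite (leq_trans (size_poly_exp_leq _ _)) // ltnS.
by have := size_linear_poly a b; case: (size _) => [|[|[]]] //=; rewrite ?mul0n ?mul1n.
Qed.

Lemma Ptrans_XnsubC M m A : M \in unitmx -> (0 < m)%N ->
  Ptrans M ('X^m - A%:P) = mob_num M ^+ m - A *: mob_den M ^+ m.
Proof.
move=> uM m_gt0; rewrite Ptrans_degE size_XnsubC //=.
apply/eqP; rewrite -tofrac_eq tofrac_Ptrans_deg ?size_XnsubC //.
have y0 : tofrac (mob_den M) != 0 by rewrite tofrac_eq0 mob_den_neq0.
rewrite rmorphB /= map_polyXn map_polyC !hornerE expr_div_n mulrBr mulrCA.
by rewrite (mulfV (expf_neq0 m y0)) mulr1 rmorphB -mul_polyC rmorphM !rmorphXn mulrC.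
Qed.

Lemma size_Ptrans_XnsubC M m A : M \in unitmx -> (0 < m)%N ->
  mxa M ^+ m != A * mxc M ^+ m -> size (Ptrans M ('X^m - A%:P)) = m.+1.
Proof.
move=> uM m_gt0 lead_neq0; apply/eqP; rewrite eqn_leq.
rewrite (leq_trans (size_Ptrans _ _)) ?size_XnsubC //= ltnNge.
apply: contra lead_neq0 => /(nth_default 0).
by rewrite Ptrans_XnsubC // coefB coefZ !coef_linear_exp => /eqP; rewrite subr_eq0.
Qed.

Lemma size_Ptrans_XsubC M A : M \in unitmx -> act_inf M != Some A ->
  size (Ptrans M ('X^1 - A%:P)) = 2.
Proof.
move=> uM MinfA; apply: size_Ptrans_XnsubC; rewrite // !expr1.
have [l1 _ _ _] := mx2_mul_eq1 (mulVmx uM).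
move: MinfA; rewrite /act_inf; have [c0 _|c0] := eqVneq (mxc M) 0.
  by apply: contra_eq_neq l1; rewrite c0 mulr0 => ->; rewrite !mulr0 addr0 eq_sym oner_neq0.
by apply: contraNneq => ->; rewrite mulfK.
Qed.

Lemma size_Ptrans_XnsubC_irred M e j A : M \in unitmx -> (0 < e)%N -> (1 < j)%N ->
  irreducible_poly ('X^(e * j) - A%:P) -> size (Ptrans M ('X^j - A%:P)) = j.+1.
Proof.
move=> uM e_gt0 j_gt1 irr; apply: size_Ptrans_XnsubC; rewrite 1?ltnW //.
have [l1 _ _ _] := mx2_mul_eq1 (mulVmx uM).
apply/eqP => lead0; have [c0|c0] := eqVneq (mxc M) 0.
  move: lead0 l1; rewrite c0 expr0n gtn_eqF 1?ltnW // mulr0 => /eqP.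
  by rewrite expf_eq0 => /andP[_ /eqP ->]; rewrite !mulr0 addr0 => /eqP; rewrite eq_sym oner_eq0.
have A_exp : A = (mxa M / mxc M) ^+ j by rewrite expr_div_n lead0 mulfK ?expf_neq0.
by move: irr; rewrite A_exp => /(irredp_XnsubC_exp e_gt0) j1; rewrite j1 in j_gt1.
Qed.

Lemma horner_Ptrans_invmx_XnsubC M m A : M \in unitmx -> mxc M != 0 -> (0 < m)%N ->
  (Ptrans (invmx M) ('X^m - A%:P)).[mxa M / mxc M] = (mxc M ^+ m)^-1.
Proof.
move=> uM c0 m_gt0; have [l1 _ l3 _] := mx2_mul_eq1 (mulVmx uM).
have shift (p q : F) : mxa M / mxc M * p + q = (p * mxa M + q * mxc M) / mxc M.
  by field.
rewrite Ptrans_XnsubC ?unitmx_inv // /mob_num /mob_den !hornerE !shift l1 l3.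
by rewrite mul0r expr0n gtn_eqF // mulr0 subr0 div1r exprVn.
Qed.

End Ptrans_deg.

Theorem lemma5p4 (F : finFieldType) (t n : nat) (s : 'M[F]_2) (A : F) :
  (2 <= t)%N -> (1 <= n)%N -> s \in unitmx ->
  irreducible_poly ('X^(n * t) - A%:P) ->
  (mxc s != 0 -> A != - mxd s / mxc s) ->
  (~~ odd t -> #|F| %% 4 = 1)%N ->
  let g0 := Ptrans (invmx s) ('X^n - A%:P) in
  [/\ irreducible_poly g0, size g0 = n.+1,
      ~~ proj_root g0 (act_inf s)
    & irreducible_poly (Rtrans s t g0)].
Proof.
move=> t_ge2 n_gt0 us irr_nt hA _ g0.
have uN : invmx s \in unitmx by rewrite unitmx_inv.
have irr_n : irreducible_poly ('X^n - A%:P).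
  apply: (irredp_comp_poly (q := 'X^t)); first by rewrite size_polyXn ltnS ltnW.
  by rewrite -/(Strans t _) Strans_XnsubC.
have size_g0 : size g0 = n.+1.
  have [n1|n_gt1] := leqP n 1.
    rewrite /g0 (_ : n = 1%N); last by apply/anti_leq/andP.
    apply: (size_Ptrans_XsubC uN); rewrite (act_inf_invmx us).
    by case: ifP => // c0; rewrite (inj_eq (@Some_inj _)) eq_sym hA.
  by apply: (size_Ptrans_XnsubC_irred uN (ltnW t_ge2) n_gt1); rewrite mulnC.
have size_Pn : size g0 = size ('X^n - A%:P) by rewrite size_g0 size_XnsubC.
have Kg0 : Ptrans s g0 = 'X^n - A%:P by rewrite -{1}(invmxK s) (PtransK uN size_Pn).
have nt_gt1 : (1 < n * t)%N by rewrite (leq_trans t_ge2) // leq_pmull.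
split.
- exact: irredp_Ptrans uN irr_n size_Pn.
- exact: size_g0.
- rewrite /act_inf; case: ifP => [c0|_] //=.
  by rewrite /root horner_Ptrans_invmx_XnsubC // invr_eq0 expf_neq0.
- rewrite /Rtrans Kg0 Strans_XnsubC; apply: (irredp_Ptrans uN irr_nt).
  rewrite size_XnsubC ?(ltnW nt_gt1) //.
  by apply: (size_Ptrans_XnsubC_irred uN (ltnSn 0) nt_gt1); rewrite mul1n.
Qed.
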